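(* For every integer $\Delta\ge 3$, there exists a connected graph $G_\Delta$ of order $n$ and maximum degree $\Delta$ such that $F_c(G_\Delta)=\left(\frac{\Delta}{\Delta+1}\right)n+1$.
   Context: Forcing process: given a set of initially colored vertices, at each step a colored vertex with exactly one non-colored neighbor forces (colors) that neighbor. A set $S\subseteq V(G)$ is a forcing set if iterating this process from $S$ eventually colors all vertices; it is a connected forcing set if moreover the induced subgraph $G[S]$ is connected. $F_c(G)$ is the minimum cardinality of a connected forcing set of $G$. *)

From HB Require Import structures.
From mathcomp Require Import all_boot all_order all_algebra.
Set Implicit Arguments. Unset Strict Implicit. Unset Printing Implicit Defensive.

Definition simple_graph (T : finType) (e : rel T) : Prop :=
  symmetric e /\ irreflexive e.

Definition nbhd (T : finType) (e : rel T) (x : T) : {set T} := [set y | e x y].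

Definition degree (T : finType) (e : rel T) (x : T) : nat := #|nbhd e x|.

Definition max_degree (T : finType) (e : rel T) : nat := \max_(x : T) degree e x.

Definition graph_connected (T : finType) (e : rel T) : Prop :=
  forall x y : T, connect e x y.

Definition induced_connected (T : finType) (e : rel T) (S : {set T}) : Prop :=
  forall x y, x \in S -> y \in S ->
    connect (fun a b => [&& e a b, a \in S & b \in S]) x y.

(* forces_to e S S' : starting from the coloured set S, the colour-change
   rule (a coloured vertex u whose unique uncoloured neighbour is v colours v)
   applied repeatedly can yield the coloured set S'. *)
Inductive forces_to (T : finType) (e : rel T) (S : {set T}) : {set T} -> Prop :=
| forces_refl : forces_to e S S
| forces_step (S' : {set T}) (u v : T) :
    forces_to e S S' -> u \in S' -> nbhd e u :\: S' = [set v] ->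
    forces_to e S (v |: S').

Definition forcing_set (T : finType) (e : rel T) (S : {set T}) : Prop :=
  forces_to e S [set: T].

Definition connected_forcing_set (T : finType) (e : rel T) (S : {set T}) : Prop :=
  forcing_set e S /\ induced_connected e S.

Definition is_Fc (T : finType) (e : rel T) (k : nat) : Prop :=
  (exists S : {set T}, connected_forcing_set e S /\ #|S| = k) /\
  (forall S : {set T}, connected_forcing_set e S -> k <= #|S|).

(** The graph is a double broom: two stars K_{1,Δ-1} whose centres are the
    ends of a path on Δ+5 vertices, so n = 3Δ+3 and the maximum degree Δ is
    attained at the two centres.  Two uncoloured leaves of the same star are
    twins: any vertex adjacent to one is adjacent to the other, hence can never
    force either of them.  So a forcing set misses at most one leaf per star,
    and in particular contains a leaf of each star; being connected, it must
    then contain the whole path between them.  Thus F_c = n - 2 = 3Δ+1, and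
    all vertices but one leaf of each star do form a connected forcing set. *)
From mathcomp Require Import all_boot all_order all_algebra.
From mathcomp Require Import zify.
Import GRing.Theory Num.Theory.

Set Implicit Arguments.
Unset Strict Implicit.
Unset Printing Implicit Defensive.

Definition twins (T : finType) (e : rel T) (x y : T) : Prop :=
  forall z, z != x -> z != y -> e z x = e z y.

Lemma forces_to_twins (T : finType) (e : rel T) (S S' : {set T}) (x y : T) :
  x != y -> twins e x y -> x \notin S -> y \notin S ->
  forces_to e S S' -> x \notin S' /\ y \notin S'.
Proof.
move=> xy twxy xS yS; elim=> [|S1 u v _ [xS1 yS1] uS1 Nu]; first by [].
have u_out w : w \notin S1 -> u != w.
  by apply: contraNneq => <-.
have v_x : v != x.
  apply/eqP=> vx; have : y \in nbhd e u :\: S1.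
    rewrite !inE yS1 -twxy ?u_out //.
    by move: (set11 v); rewrite -Nu vx !inE => /andP[_ ->].
  by rewrite Nu inE vx eq_sym (negbTE xy).
have v_y : v != y.
  apply/eqP=> vy; have : x \in nbhd e u :\: S1.
    rewrite !inE xS1 twxy ?u_out //.
    by move: (set11 v); rewrite -Nu vy !inE => /andP[_ ->].
  by rewrite Nu inE vy (negbTE xy).
by rewrite !inE !negb_or eq_sym v_x eq_sym v_y xS1 yS1.
Qed.

Lemma forcing_set_twins (T : finType) (e : rel T) (S : {set T}) (x y : T) :
  forcing_set e S -> twins e x y -> x \notin S -> y \notin S -> x = y.
Proof.
move=> FS twxy xS yS; apply/eqP/negPn/negP => xy.
by have [] := forces_to_twins xy twxy xS yS FS; rewrite in_setT.
Qed.

Definition induced (T : finType) (e : rel T) (S : {set T}) : rel T :=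
  fun a b => [&& e a b, a \in S & b \in S].

Lemma induced_connected_root (T : finType) (e : rel T) (S : {set T}) (r : T) :
  symmetric e ->
  (forall x, x \in S -> connect (induced e S) x r) ->
  induced_connected e S.
Proof.
move=> sym_e to_r x y xS yS; apply: connect_trans (to_r x xS) _.
rewrite sym_connect_sym ?to_r // => a b.
by rewrite /induced sym_e; case: (a \in S); case: (b \in S); rewrite ?andbF.
Qed.

Lemma induced_connected_setT (T : finType) (e : rel T) :
  induced_connected e [set: T] -> graph_connected e.
Proof.
move=> Ce x y; rewrite -(eq_connect (e := induced e [set: T])) ?Ce // => a b.
by rewrite /induced !in_setT !andbT.
Qed.

Lemma induced_connected_cut (T : finType) (e : rel T) (S : {set T})
    (P : pred T) (x y z : T) :
  induced_connected e S -> x \in S -> y \in S -> P x -> ~~ P y ->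
  (forall u w, e u w -> u != z -> w != z -> P u = P w) -> z \in S.
Proof.
move=> CS xS yS Px Py cut; apply/negPn/negP => zS.
have closedP : closed (induced e S) P.
  move=> u w /and3P[euw uS wS].
  by apply: cut => //; apply: contraNneq zS => <-.
by have := closed_connect closedP (CS x y xS yS); rewrite !unfold_in Px (negbTE Py).
Qed.

Section DoubleBroom.

Variable D : nat.
Hypothesis D_ge3 : 3 <= D.

Local Notation hubA := (D - 1).
Local Notation hubB := (2 * D + 3).
Local Notation V := 'I_(3 * D + 2).+1.

(* Vertices [0 .. D-2] are the leaves at [hubA], [hubA .. hubB] is the path,
   and [hubB+1 .. 3D+2] are the leaves at [hubB]. *)
Definition broom_adj (x y : nat) : bool :=
  [|| [&& hubA <= x, y == x.+1 & y <= hubB],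
      [&& hubA <= y, x == y.+1 & x <= hubB],
      (x < hubA) && (y == hubA), (y < hubA) && (x == hubA),
      (hubB < x) && (y == hubB) | (hubB < y) && (x == hubB)].

Definition broom : rel V := fun x y => broom_adj x y.

Lemma broom_simple : simple_graph broom.
Proof.
split=> [x y | x]; rewrite /broom /broom_adj; first by apply/idP/idP; lia.
by apply/negbTE/negP; lia.
Qed.

Lemma connect_spine_hubA (S : {set V}) :
  (forall z : V, hubA <= z <= hubB -> z \in S) ->
  forall x, x \in S -> connect (induced broom S) x (inord hubA).
Proof.
move=> spineS.
set eS := induced broom S.
have inS k : hubA <= k <= hubB -> (inord k : V) \in S.
  by move=> hk; apply: spineS; rewrite inordK; lia.
have edge x k : x \in S -> hubA <= k <= hubB -> broom_adj x k -> eS x (inord k).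
  by move=> xS hk xk; rewrite /eS /induced /broom xS inS // inordK ?xk; lia.
have along_spine k : k <= D + 4 -> connect eS (inord (hubA + k)) (inord hubA).
  elim: k => [|k IHk] hk; first by rewrite addn0 connect0.
  apply/(connect_trans _ (IHk (ltnW hk)))/connect1/edge.
  - by apply: inS; lia.
  - lia.
  - by rewrite /broom_adj inordK; lia.
move=> x xS; have x_lt := ltn_ord x.
case: (ltnP x hubA) => [x_leafA | x_ge].
  by apply/connect1/edge => //; rewrite /broom_adj; lia.
case: (leqP x hubB) => [x_spine | x_leafB].
  have -> : x = inord (hubA + (x - hubA)) by apply: ord_inj; rewrite inordK; lia.
  by apply: along_spine; lia.
apply: (connect_trans _ (along_spine (D + 4) _)) => //.
by apply/connect1/edge => //; rewrite /broom_adj; lia.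
Qed.

Lemma broom_induced_connected (S : {set V}) :
  (forall z : V, hubA <= z <= hubB -> z \in S) -> induced_connected broom S.
Proof.
move=> spineS; apply: (induced_connected_root (r := inord hubA)).
  by case: broom_simple.
exact: connect_spine_hubA.
Qed.

Lemma broom_connected : graph_connected broom.
Proof. by apply/induced_connected_setT/broom_induced_connected => z; rewrite in_setT. Qed.

(* [i < D |-> broom_nbr x i] lists the neighbours of [x], with repetitions. *)
Definition broom_nbr (x i : nat) : nat :=
  if x < hubA then hubA
  else if x == hubA then (if i < hubA then i else D)
  else if x < hubB then (if i == 0 then x.-1 else x.+1)
  else if x == hubB then (if i < hubA then hubB.+1 + i else hubB.-1)
  else hubB.

Ltac case_ifs := repeat (case: ifP => [/idP ?| /negbT ?]).

Lemma broom_nbr_onto (x y : V) : broom x y -> exists i : 'I_D, broom_nbr x i = y.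
Proof.
have D_gt0 : 0 < D by lia.
have D1_lt : D - 1 < D by lia.
have D_gt1 : 1 < D by lia.
move: (ltn_ord x) (ltn_ord y); rewrite /broom /broom_adj /broom_nbr => x_lt y_lt xy.
case: (ltngtP x hubA) => x_hubA.
- by exists (Ordinal D_gt0); case_ifs; lia.
- case: (ltngtP x hubB) => x_hubB.
  + by case: (ltnP y x) => y_x; [exists (Ordinal D_gt0) | exists (Ordinal D_gt1)];
      rewrite /=; case_ifs; lia.
  + by exists (Ordinal D_gt0); case_ifs; lia.
  + case: (ltnP hubB y) => y_hubB.
      have yi : y - hubB.+1 < D by lia.
      by exists (Ordinal yi); rewrite /=; case_ifs; lia.
    by exists (Ordinal D1_lt); rewrite /=; case_ifs; lia.
- case: (ltnP y hubA) => y_hubA.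
    have yD : y < D by lia.
    by exists (Ordinal yD); rewrite /=; case_ifs; lia.
  by exists (Ordinal D1_lt); rewrite /=; case_ifs; lia.
Qed.

Lemma broom_degree_le (x : V) : degree broom x <= D.
Proof.
pose nbr (i : 'I_D) : V := inord (broom_nbr x i).
have sub : nbhd broom x \subset nbr @: [set: 'I_D].
  apply/subsetP => y; rewrite inE => /broom_nbr_onto[i nbr_i].
  by apply/imsetP; exists i; rewrite ?inE //; apply: ord_inj; rewrite inordK // nbr_i.
apply: leq_trans (subset_leq_card sub) _.
by apply: leq_trans (leq_imset_card _ _) _; rewrite cardsT card_ord.
Qed.

Lemma broom_degree_hubA : degree broom (inord hubA) = D.
Proof.
apply/eqP; rewrite eqn_leq broom_degree_le /=.
pose nbr (i : 'I_D) : V := inord (broom_nbr hubA i).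
have val_nbr (i : 'I_D) : nat_of_ord (nbr i) = broom_nbr hubA i.
  by rewrite inordK //; move: (ltn_ord i); rewrite /broom_nbr; case_ifs; lia.
have nbr_inj : injective nbr.
  move=> i j /(congr1 (@nat_of_ord _)); rewrite !val_nbr => eq_ij; apply: ord_inj.
  by move: eq_ij (ltn_ord i) (ltn_ord j); rewrite /broom_nbr; case_ifs; lia.
rewrite -{1}(card_ord D) -cardsT -(card_imset _ nbr_inj) subset_leq_card //.
apply/subsetP => _ /imsetP[i _ ->]; rewrite inE /broom val_nbr inordK; last by lia.
by move: (ltn_ord i); rewrite /broom_adj /broom_nbr; case_ifs; lia.
Qed.

Lemma broom_max_degree : max_degree broom = D.
Proof.
apply/eqP; rewrite eqn_leq; apply/andP; split.
  by apply/bigmax_leqP => x _; apply: broom_degree_le.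
by rewrite -{1}broom_degree_hubA leq_bigmax.
Qed.

Lemma broom_leavesA_twins (x y : V) : x < hubA -> y < hubA -> twins broom x y.
Proof. by move=> x_leaf y_leaf z _ _; rewrite /broom /broom_adj; apply/idP/idP; lia. Qed.

Lemma broom_leavesB_twins (x y : V) : hubB < x -> hubB < y -> twins broom x y.
Proof. by move=> x_leaf y_leaf z _ _; rewrite /broom /broom_adj; apply/idP/idP; lia. Qed.

Lemma forcing_set_leaf (S : {set V}) (k l : nat) :
  forcing_set broom S -> k != l -> k <= 3 * D + 2 -> l <= 3 * D + 2 ->
  twins broom (inord k) (inord l) -> exists2 x : V, x \in S & (x == k :> nat) || (x == l :> nat).
Proof.
move=> FS kl k_lt l_lt twkl.
case: (boolP ((inord k : V) \in S)) => kS.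
  by exists (inord k); rewrite // inordK ?eqxx.
case: (boolP ((inord l : V) \in S)) => lS.
  by exists (inord l); rewrite // inordK ?eqxx ?orbT.
have /(congr1 (@nat_of_ord _)) := forcing_set_twins FS twkl kS lS.
by rewrite !inordK // => /eqP; rewrite (negbTE kl).
Qed.

Lemma broom_spine_sub (S : {set V}) :
  connected_forcing_set broom S -> forall z : V, hubA <= z <= hubB -> z \in S.
Proof.
move=> [FS CS] z z_spine.
have [xA xAS xA_leaf] : exists2 x : V, x \in S & (x == 0 :> nat) || (x == 1 :> nat).
  apply: forcing_set_leaf; rewrite //; try lia.
  by apply: broom_leavesA_twins; rewrite inordK; lia.
have [xB xBS xB_leaf] :
    exists2 x : V, x \in S & (x == 3 * D + 2 :> nat) || (x == 3 * D + 1 :> nat).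
  apply: forcing_set_leaf; rewrite //; try lia.
  by apply: broom_leavesB_twins; rewrite inordK; lia.
apply: (induced_connected_cut (P := fun w : V => w < z) CS xAS xBS); rewrite /=; try lia.
move=> u w; rewrite /broom /broom_adj -!(inj_eq (@ord_inj _)) => ? ? ?.
by apply/idP/idP; lia.
Qed.

Lemma broom_Fc_lower (S : {set V}) :
  connected_forcing_set broom S -> 3 * D + 1 <= #|S|.
Proof.
move=> CFS; have FS := CFS.1.
pose LA := [set w : V | w < hubA] :\: S.
pose LB := [set w : V | hubB < w] :\: S.
have outside : ~: S \subset LA :|: LB.
  apply/subsetP => w; rewrite !inE => wS; rewrite wS /=.
  have : ~~ (hubA <= w <= hubB) by apply: contraNN wS; apply: broom_spine_sub.
  by lia.
have LA_le1 : #|LA| <= 1.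
  apply/card_le1_eqP => x y; rewrite !inE => /andP[xS x_leaf] /andP[yS y_leaf].
  exact: esym (forcing_set_twins FS (broom_leavesA_twins x_leaf y_leaf) xS yS).
have LB_le1 : #|LB| <= 1.
  apply/card_le1_eqP => x y; rewrite !inE => /andP[xS x_leaf] /andP[yS y_leaf].
  exact: esym (forcing_set_twins FS (broom_leavesB_twins x_leaf y_leaf) xS yS).
have := subset_leq_card outside; rewrite cardsU.
have := cardsC S; rewrite card_ord.
set c := #|~: S|; set a := #|LA|; set b := #|LB|.
by lia.
Qed.

Lemma broom_Fc_upper :
  exists S : {set V}, connected_forcing_set broom S /\ #|S| = 3 * D + 1.
Proof.
pose tipB : V := inord (3 * D + 2).
pose S0 := [set z : V | 0 < z < 3 * D + 2].
have in_S0 k : (0 < k < 3 * D + 2) -> (inord k : V) \in S0.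
  by move=> hk; rewrite inE inordK //; lia.
have S0C : ~: S0 = [set ord0; tipB].
  apply/setP => z; rewrite !inE -!(inj_eq (@ord_inj _)) /= inordK //.
  by move: (ltn_ord z); lia.
exists S0; split; last first.
  have := cardsC S0; rewrite card_ord S0C cards2 -(inj_eq (@ord_inj _)) /=.
  have tipB_ne0 : (0 != 3 * D + 2) by lia.
  by rewrite inordK // tipB_ne0 => h; apply: (@addIn 2); rewrite h; lia.
split; last by apply: broom_induced_connected => z hz; rewrite inE; lia.
have force_leafA : nbhd broom (inord hubA) :\: S0 = [set ord0].
  apply/setP => z; rewrite !inE /broom -(inj_eq (@ord_inj _)) inordK /=; last by lia.
  by move: (ltn_ord z); rewrite /broom_adj; lia.
have force_leafB : nbhd broom (inord hubB) :\: (ord0 |: S0) = [set tipB].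
  apply/setP => z; rewrite !inE /broom -!(inj_eq (@ord_inj _)) !inordK /=; try lia.
  by move: (ltn_ord z); rewrite /broom_adj; lia.
rewrite /forcing_set (_ : [set: V] = tipB |: (ord0 |: S0)); last first.
  apply/setP => z; rewrite !inE -!(inj_eq (@ord_inj _)) /= inordK //.
  by move: (ltn_ord z); lia.
apply: (forces_step _ _ force_leafB); last by rewrite in_setU in_S0 ?orbT //; lia.
apply: (forces_step _ _ force_leafA); last by rewrite in_S0 //; lia.
exact: forces_refl.
Qed.

End DoubleBroom.

Arguments broom : clear implicits.

Local Open Scope ring_scope.

Theorem proposition3 (Delta : nat) (hDelta : (3 <= Delta)%N) :
  exists (n : nat) (e : rel 'I_n),
    [/\ simple_graph e, graph_connected e, max_degree e = Delta &
        exists k : nat, is_Fc e k /\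
          (k%:R : rat) = (Delta%:R / (Delta.+1)%:R) * n%:R + 1].
Proof.
exists (3 * Delta + 2).+1, (broom Delta); split.
- exact: broom_simple.
- exact: broom_connected.
- exact: broom_max_degree.
exists (3 * Delta + 1); split.
  by split; [apply: broom_Fc_upper | move=> S; apply: broom_Fc_lower].
have -> : ((3 * Delta + 2).+1 = Delta.+1 * 3)%N by lia.
by rewrite natrM mulrA divfK ?pnatr_eq0 // -natrM natrD mulnC.
Qed.
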